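(* Let $G$ be a finite simple graph with vertices in $\mathbb{N}$ and let $G_1,\ldots,G_m$ be its connected components. Then the independence complex $\Delta(G)$ is sortable if and only if each $\Delta(G_r)$, $r=1,\dots,m$, is sortable.
   Context: The independence complex $\Delta(G)$ of a graph $G$ is the simplicial complex of all independent sets of vertices of $G$ (sets containing no edge). For finite $F,G\subset\mathbb{N}$ with $|F|=r,|G|=s$, write $\mathbf{x}^F\mathbf{x}^G=x_{i_1}\cdots x_{i_{r+s}}$ with $i_1\le\cdots\le i_{r+s}$ (where $\mathbf{x}^F=\prod_{i\in F}x_i$) and set $\mathrm{sort}(F,G)=(\{i_k:k\text{ odd}\},\{i_k:k\text{ even}\})$. A simplicial complex $\Delta$ with $V(\Delta)\subset\mathbb{N}$ is sortable with respect to the given labeling if $\mathrm{sort}(F,G)\in\Delta\times\Delta$ for all $F,G\in\Delta$; it is sortable if it is sortable with respect to some labeling of its vertices by distinct integers. *)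

From mathcomp Require Import all_boot.
Set Implicit Arguments. Unset Strict Implicit. Unset Printing Implicit Defensive.

(* A finite subset of N is represented by a list (as a set via membership;
   duplicates are irrelevant).  A simplicial complex is given by its face
   predicate  D : seq nat -> Prop  and a vertex predicate  P : nat -> Prop. *)

(* sort(F,G): write x^F x^G = x_{i_1}...x_{i_{r+s}} with i_1 <= ... <= i_{r+s};
   first component = entries at odd positions k (1-based), second = even. *)
Definition sort_pair (F G : seq nat) : seq nat * seq nat :=
  let s := sort leq (undup F ++ undup G) in
  ([seq nth 0 s i | i <- iota 0 (size s) & ~~ odd i],
   [seq nth 0 s i | i <- iota 0 (size s) & odd i]).

Definition sortable_wrt (D : seq nat -> Prop) : Prop :=
  forall F G, D F -> D G -> D (sort_pair F G).1 /\ D (sort_pair F G).2.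

Definition relabel (D : seq nat -> Prop) (f : nat -> nat) : seq nat -> Prop :=
  fun F' => exists2 F, D F & F' =i map f F.

Definition sortable (P : nat -> Prop) (D : seq nat -> Prop) : Prop :=
  exists f : nat -> nat,
    (forall x y, P x -> P y -> f x = f y -> x = y) /\ sortable_wrt (relabel D f).

Definition indep_complex (P : nat -> Prop) (E : rel nat) : seq nat -> Prop :=
  fun F => (forall x, x \in F -> P x) /\ (forall x y, x \in F -> y \in F -> ~~ E x y).

Definition connected (E : rel nat) (x y : nat) : Prop :=
  exists p : seq nat, path E x p /\ last x p = y.

Definition component (V : seq nat) (E : rel nat) (x : nat) : nat -> Prop :=
  fun y => y \in V /\ connected E x y.

From mathcomp Require Import all_boot zify.
From Stdlib Require Import ClassicalEpsilon.

(* The proof rests on a local description of sort(F,G): a vertex v belongs to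
   the part of parity b iff x_v occurs in x^F x^G and either the number of
   variables of x^F x^G below x_v has parity b, or x_v occurs twice
   (mem_sort_part).  Hence sort(F,G) depends only on the sets F, G and is
   contained in F u G.

   - Restriction (sortable_induced): the independence complex of an induced
     subgraph is a full subcomplex, so any sorting labeling of the whole
     complex restricts to one of the subgraph; components are a special case.
   - Gluing (glue_sortable): given component labelings h bounded by M, label v
     by (index of its component) * M + h v.  Locally, sorting the glued labels
     inside one component is sorting the h-labels of that component with the
     parity shifted by the number of variables in earlier components
     (mem_sort_part_glue); since every edge lies inside a component, sorted
     faces stay independent. *)

Set Implicit Arguments.
Unset Strict Implicit.
Unset Printing Implicit Defensive.

(* The two components of sort(F,G), indexed by a boolean: [false] gives the
   odd positions (1-based) of the sorted product x^F x^G, [true] the even. *)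
Definition sort_part (b : bool) (F G : seq nat) : seq nat :=
  if b then (sort_pair F G).2 else (sort_pair F G).1.

Definition mult (F G : seq nat) (v : nat) : nat := (v \in F) + (v \in G).

Definition below (F G : seq nat) (v : nat) : nat :=
  count (fun y => y < v) (undup F) + count (fun y => y < v) (undup G).

Lemma sortable_wrtP (D : seq nat -> Prop) :
  sortable_wrt D <-> forall b F G, D F -> D G -> D (sort_part b F G).
Proof.
split=> [sD [] F G DF DG | sD F G DF DG]; last by split; [exact: (sD false) | exact: (sD true)].
- exact: (sD F G DF DG).2.
- exact: (sD F G DF DG).1.
Qed.

Lemma nth_sorted_eq (s : seq nat) (x i : nat) : sorted leq s ->
  (i < size s) && (nth 0 s i == x) =
  (count (fun y => y < x) s <= i < count (fun y => y <= x) s).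
Proof.
elim: s i => [|a s IH] i s_sorted /=; first by rewrite ltn0.
have a_min : all (leq a) s := order_path_min leq_trans s_sorted.
have none_below (p : pred nat) : (forall y, a <= y -> ~~ p y) -> count p s = 0.
  move=> np; apply/eqP; rewrite -leqn0 leqNgt -has_count.
  by apply/hasPn => y /(allP a_min) /np.
have none_lt : x <= a -> count (fun y => y < x) s = 0.
  by move=> xa; apply: none_below => y ay; rewrite -leqNgt (leq_trans xa ay).
have none_le : x < a -> count (fun y => y <= x) s = 0.
  by move=> xa; apply: none_below => y ay; rewrite -ltnNge (leq_trans xa ay).
have IHs j := IH j (path_sorted s_sorted).
case: (ltngtP a x) => ax; [| have := none_le ax; have := none_lt (ltnW ax)
                             | have := none_lt (eq_leq (esym ax))];
  by case: i => [|i] /=; rewrite ?ltnS ?IHs; lia.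
Qed.

Lemma count_leq_split (s : seq nat) (x : nat) :
  count (fun y => y <= x) s = count (fun y => y < x) s + count (pred1 x) s.
Proof. by elim: s => //= a s ->; case: ltngtP => /=; lia. Qed.

Lemma parity_in_block (b : bool) (c m : nat) :
  (exists i, (odd i == b) && (c <= i < c + m)) <-> (0 < m) && ((odd c == b) || (1 < m)).
Proof.
split=> [[i /andP[/eqP <- ci]] | /andP[m_gt0 /orP[cb | m_gt1]]].
- case: (eqVneq c i) => [<-|ne]; first by rewrite eqxx; lia.
  by apply/andP; split; [lia | apply/orP; right; lia].
- by exists c; rewrite cb /=; lia.
- case: (eqVneq (odd c) b) => [cb | cb]; first by exists c; rewrite cb /=; lia.
  by exists c.+1; rewrite oddS; move: cb; case: (odd c); case: b => //= _; lia.
Qed.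

(* Position-wise description of sort(F,G): x_v lands in the part of parity b
   iff it occurs in x^F x^G and some copy of it sits at a position of parity
   b, i.e. its first copy has that parity or it occurs twice. *)
Lemma mem_sort_part (b : bool) (F G : seq nat) (v : nat) :
  (v \in sort_part b F G) = (0 < mult F G v) && ((odd (below F G v) == b) || (1 < mult F G v)).
Proof.
set s := sort leq (undup F ++ undup G).
have s_sorted : sorted leq s := sort_sorted leq_total _.
have count_s (p : pred nat) : count p s = count p (undup F) + count p (undup G).
  by rewrite count_sort count_cat.
have mult_s : count (pred1 v) s = mult F G v.
  by rewrite count_s !count_uniq_mem ?undup_uniq // !mem_undup.
have -> : sort_part b F G = [seq nth 0 s i | i <- iota 0 (size s) & odd i == b].
  by rewrite /sort_part /sort_pair -/s; case: b; congr map; apply: eq_filter => i; case: odd.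
rewrite -mult_s /below -!count_s.
apply/idP/idP => [/mapP [i] | /parity_in_block [i]].
  rewrite mem_filter mem_iota /= => /andP[ib i_lt] vi.
  apply/parity_in_block; exists i.
  rewrite ib -count_leq_split -nth_sorted_eq // -vi eqxx andbT; lia.
rewrite -count_leq_split -nth_sorted_eq // => /andP[ib /andP[i_lt /eqP vi]].
by apply/mapP; exists i; rewrite // mem_filter mem_iota ib i_lt.
Qed.

Lemma sort_part_eqi (b : bool) (F G F' G' : seq nat) :
  F =i F' -> G =i G' -> sort_part b F G =i sort_part b F' G'.
Proof.
move=> eF eG v; rewrite !mem_sort_part /mult /below eF eG.
by rewrite !(permP (perm_undup eF)) !(permP (perm_undup eG)).
Qed.

Lemma sort_part_sub (b : bool) (F G : seq nat) : {subset sort_part b F G <= F ++ G}.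
Proof. by move=> v; rewrite mem_sort_part mem_cat /mult; case: (v \in F); case: (v \in G). Qed.

Definition injective_on (P : nat -> Prop) (f : nat -> nat) : Prop :=
  forall x y, P x -> P y -> f x = f y -> x = y.

Lemma mem_map_injective_on (P : nat -> Prop) (f : nat -> nat) (s : seq nat) (u : nat) :
  injective_on P f -> (forall y, y \in s -> P y) -> P u -> (f u \in map f s) = (u \in s).
Proof.
move=> f_inj sP Pu; apply/mapP/idP => [[y ys fuy] | us]; last by exists u.
by rewrite (f_inj u y Pu (sP y ys) fuy).
Qed.

Lemma count_undup_map (P : nat -> Prop) (f : nat -> nat) (s : seq nat) (p : pred nat) :
  injective_on P f -> (forall y, y \in s -> P y) ->
  count p (undup (map f s)) = count (fun y => p (f y)) (undup s).
Proof.
move=> f_inj sP; rewrite -[RHS](count_map f p); apply: (permP (uniq_perm _ _ _)); rewrite ?undup_uniq //.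
  rewrite map_inj_in_uniq ?undup_uniq // => x y; rewrite !mem_undup => xs ys.
  exact: f_inj (sP x xs) (sP y ys).
by move=> y; rewrite mem_undup; apply/mapP/mapP => -[z zs ->]; exists z; rewrite ?mem_undup in zs *.
Qed.

Lemma relabel_sort_part_sub (f : nat -> nat) (b : bool) (F G F' G' : seq nat) (w : nat) :
  F' =i map f F -> G' =i map f G -> w \in sort_part b F' G' -> w \in map f (F ++ G).
Proof. by move=> eF eG /sort_part_sub; rewrite map_cat !mem_cat eF eG. Qed.

Lemma sortable_induced (P P' : nat -> Prop) (E : rel nat) :
  (forall x, P' x -> P x) ->
  sortable P (indep_complex P E) -> sortable P' (indep_complex P' E).
Proof.
move=> P'P [f [f_inj f_sort]]; exists f.
split=> [x y /P'P Px /P'P Py | ]; first exact: f_inj.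
apply/sortable_wrtP => b F' G' [F [FP' F_ind] eF] [G [GP' G_ind] eG].
have FG_P' y : y \in F ++ G -> P' y by rewrite mem_cat => /orP[/FP' | /GP'].
have [K [KP K_ind] eK] := (sortable_wrtP _).1 f_sort b F' G'
  (ex_intro2 _ _ F (conj (fun y yF => P'P y (FP' y yF)) F_ind) eF)
  (ex_intro2 _ _ G (conj (fun y yG => P'P y (GP' y yG)) G_ind) eG).
exists K => //; split=> // k kK.
have /(relabel_sort_part_sub eF eG) : f k \in sort_part b F' G' by rewrite eK map_f.
by rewrite (mem_map_injective_on f_inj _ (KP k kK)) => [/FG_P' | y /FG_P' /P'P].
Qed.

Lemma sortable_wrt_transport (P Q : nat -> Prop) (E : rel nat) (f g : nat -> nat) :
  (forall y, P y <-> Q y) -> (forall y, Q y -> f y = g y) ->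
  sortable_wrt (relabel (indep_complex P E) f) -> sortable_wrt (relabel (indep_complex Q E) g).
Proof.
move=> PQ fg f_sort.
have same F' : relabel (indep_complex P E) f F' <-> relabel (indep_complex Q E) g F'.
  have map_fg F : (forall y, y \in F -> Q y) -> map f F = map g F.
    by move=> FQ; apply/eq_in_map => y /FQ /fg.
  split=> -[F [FP F_ind] eF]; exists F => //.
  - by split=> // y /FP /PQ.
  - by rewrite -map_fg // => y /FP /PQ.
  - by split=> // y /FP /PQ.
  - by rewrite map_fg // => y /FP /PQ.
move=> F' G' /same DF /same DG; have [D1 D2] := f_sort F' G' DF DG.
by split; apply/same; [exact: D1 | exact: D2].
Qed.

Lemma count_add (T : eqType) (s : seq T) (a b c : pred T) :
  (forall x, x \in s -> a x = b x + c x :> nat) -> count a s = count b s + count c s.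
Proof.
elim: s => //= y s IH abc; rewrite abc ?mem_head // IH; first lia.
by move=> x xs; apply: abc; rewrite in_cons xs orbT.
Qed.

(* The vertices V are split into blocks (later: connected
   components) and h labels each block injectively by numbers below M.  The
   glued labeling orders vertices first by block, then by h. *)
Section Gluing.

Variables (V : seq nat) (block h : nat -> nat) (M : nat).
Hypothesis h_bound : forall v, v \in V -> h v < M.
Hypothesis h_inj : forall u v, u \in V -> v \in V -> block u = block v -> h u = h v -> u = v.

Definition glue (v : nat) : nat := block v * M + h v.

Definition in_block_of (i : nat) (v : nat) : Prop := v \in V /\ block v = i.

Definition in_block (i : nat) (s : seq nat) : seq nat := [seq y <- s | block y == i].

Definition lower (i : nat) (F G : seq nat) : nat :=
  count (fun y => block y < i) (undup F) + count (fun y => block y < i) (undup G).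

Lemma h_injective_on_block (i : nat) : injective_on (in_block_of i) h.
Proof. by move=> x y [xV xi] [yV yi]; apply: h_inj; rewrite ?xi ?yi. Qed.

Lemma in_block_sub (i : nat) (s : seq nat) :
  {subset s <= V} -> forall y, y \in in_block i s -> in_block_of i y.
Proof. by move=> sV y; rewrite mem_filter => /andP[/eqP yi /sV yV]. Qed.

(* Different blocks get disjoint ranges of labels, so glue is injective on V. *)
Lemma glue_injective : injective_on (fun v => v \in V) glue.
Proof.
move=> u v uV vV; rewrite /glue => e.
have hu := h_bound uV; have hv := h_bound vV.
have uv : block u = block v by nia.
by apply: (h_inj uV vV uv); move: e; rewrite uv; lia.
Qed.

Lemma glue_ltn (u v : nat) : u \in V -> v \in V ->
  (glue v < glue u) = (block v < block u) + ((block v == block u) && (h v < h u)) :> nat.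
Proof.
move=> /h_bound hu /h_bound hv; rewrite /glue.
case: (ltngtP (block v) (block u)) => [lt | gt | ->] /=; last by rewrite ltn_add2l.
- by have -> : block v * M + h v < block u * M + h u by nia.
- by have -> : (block v * M + h v < block u * M + h u) = false by apply/negbTE; rewrite -leqNgt; nia.
Qed.

Lemma count_below_glue (s : seq nat) (w : nat) : {subset s <= V} -> w \in V ->
  count (fun y => y < glue w) (undup (map glue s)) =
  count (fun y => block y < block w) (undup s) +
  count (fun y => y < h w) (undup (map h (in_block (block w) s))).
Proof.
move=> sV wV; rewrite (count_undup_map _ glue_injective sV).
rewrite (count_undup_map _ (h_injective_on_block (i:=block w)) (in_block_sub sV)).
rewrite /in_block -filter_undup count_filter.
apply: count_add => y; rewrite mem_undup => /sV yV /=.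
by rewrite (glue_ltn wV yV) andbC.
Qed.

Lemma mult_glue (F G : seq nat) (w : nat) : {subset F <= V} -> {subset G <= V} -> w \in V ->
  mult (map glue F) (map glue G) (glue w) =
  mult (map h (in_block (block w) F)) (map h (in_block (block w) G)) (h w).
Proof.
move=> FV GV wV; have wb : in_block_of (block w) w by [].
rewrite /mult !(mem_map_injective_on glue_injective) //.
rewrite !(mem_map_injective_on (h_injective_on_block (i:=block w)) (in_block_sub _) wb) //.
by rewrite !mem_filter eqxx.
Qed.

Lemma below_glue (F G : seq nat) (w : nat) : {subset F <= V} -> {subset G <= V} -> w \in V ->
  below (map glue F) (map glue G) (glue w) =
  lower (block w) F G + below (map h (in_block (block w) F)) (map h (in_block (block w) G)) (h w).
Proof. by move=> FV GV wV; rewrite /below /lower !count_below_glue //; lia. Qed.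

Lemma mem_sort_part_glue (b : bool) (F G : seq nat) (w : nat) :
  {subset F <= V} -> {subset G <= V} -> w \in V ->
  (glue w \in sort_part b (map glue F) (map glue G)) =
  (h w \in sort_part (b (+) odd (lower (block w) F G))
                     (map h (in_block (block w) F)) (map h (in_block (block w) G))).
Proof.
move=> FV GV wV; rewrite !mem_sort_part mult_glue // below_glue // oddD.
by case: odd; case: odd; case: b.
Qed.

Variable E : rel nat.
Hypothesis block_edge : forall u v, E u v -> block u = block v.
Hypothesis block_sortable :
  forall v, v \in V -> sortable_wrt (relabel (indep_complex (in_block_of (block v)) E) h).

Lemma in_block_face (i : nat) (F : seq nat) :
  indep_complex (fun v => v \in V) E F -> indep_complex (in_block_of i) E (in_block i F).
Proof.
case=> FV F_ind; split; first exact: in_block_sub.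
by move=> x y; rewrite !mem_filter => /andP[_ xF] /andP[_ yF]; apply: F_ind.
Qed.

(* An edge lies
   inside a block, where the sorted faces are governed by mem_sort_part_glue. *)
Lemma glue_sortable : sortable (fun v => v \in V) (indep_complex (fun v => v \in V) E).
Proof.
exists glue; split; first exact: glue_injective.
apply/sortable_wrtP => b F' G' [F DF eF] [G DG eG].
have [FV _] := DF; have [GV _] := DG.
set S := sort_part b F' G'.
exists [seq v <- V | glue v \in S]; last first.
  move=> w; apply/idP/mapP => [wS | [y]]; last by rewrite mem_filter => /andP[yS _] ->.
  have /mapP [y] := relabel_sort_part_sub eF eG wS.
  rewrite mem_cat => /orP[/FV | /GV] yV wy; by exists y; rewrite // mem_filter -wy wS.
split=> [y | u v]; first by rewrite mem_filter => /andP[].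
rewrite !mem_filter => /andP[uS uV] /andP[vS vV]; apply/negP => uv.
set b' := b (+) odd (lower (block u) F G).
have [K [KB K_ind] eK] := (sortable_wrtP _).1 (block_sortable uV) b' _ _
  (ex_intro2 _ _ _ (in_block_face (block u) DF) (fun _ => erefl))
  (ex_intro2 _ _ _ (in_block_face (block u) DG) (fun _ => erefl)).
have inK x : x \in V -> block x = block u -> glue x \in S -> x \in K.
  move=> xV xu; rewrite /S (sort_part_eqi b eF eG) mem_sort_part_glue // xu eK.
  by rewrite (mem_map_injective_on (h_injective_on_block (i:=block u)) KB).
by have := K_ind u v (inK u uV erefl uS) (inK v vV (esym (block_edge uv)) vS); rewrite uv.
Qed.

End Gluing.

Definition connectedb (E : rel nat) (x y : nat) : bool :=
  if excluded_middle_informative (connected E x y) then true else false.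

Lemma connectedbP (E : rel nat) (x y : nat) : reflect (connected E x y) (connectedb E x y).
Proof. by rewrite /connectedb; case: excluded_middle_informative => h; constructor. Qed.

(* Index in V of the first vertex connected to v, and that vertex itself:
   a canonical name for the connected component of v. *)
Definition comp_index (V : seq nat) (E : rel nat) (v : nat) : nat :=
  find (fun y => connectedb E y v) V.

Definition comp_rep (V : seq nat) (E : rel nat) (v : nat) : nat := nth 0 V (comp_index V E v).

Section Components.

Variables (V : seq nat) (E : rel nat).
Hypothesis symE : symmetric E.

Lemma connected_rcons (x y z : nat) : connected E x y -> E y z -> connected E x z.
Proof.
case=> p [xp py] yz; exists (rcons p z).
by rewrite rcons_path xp py yz last_rcons.
Qed.

Lemma has_connected_to (v : nat) : v \in V -> has (fun y => connectedb E y v) V.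
Proof. by move=> vV; apply/hasP; exists v => //; apply/connectedbP; exists [::]. Qed.

Lemma comp_rep_in (v : nat) : v \in V -> comp_rep V E v \in V.
Proof. by move=> /has_connected_to; rewrite has_find; apply: mem_nth. Qed.

Lemma comp_rep_connected (v : nat) : v \in V -> connected E (comp_rep V E v) v.
Proof. by move=> /has_connected_to /(nth_find 0) /connectedbP. Qed.

(* Adjacent vertices are connected to the same vertices, hence share an index. *)
Lemma comp_index_edge (u v : nat) : E u v -> comp_index V E u = comp_index V E v.
Proof.
move=> uv; apply: eq_find => y; apply/connectedbP/connectedbP => yc.
  exact: connected_rcons yc uv.
by apply: connected_rcons yc _; rewrite symE.
Qed.

Lemma comp_index_connected (x y : nat) : connected E x y -> comp_index V E x = comp_index V E y.
Proof.
case=> p []; elim: p x => [|z p IH] x /=; first by move=> _ ->.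
by case/andP=> xz zp py; rewrite (comp_index_edge xz) (IH z zp py).
Qed.

Lemma component_block (v : nat) : v \in V -> forall y,
  component V E (comp_rep V E v) y <-> y \in V /\ comp_index V E y = comp_index V E v.
Proof.
move=> vV y; split=> [[yV ry] | [yV yv]]; last first.
  by split=> //; rewrite /comp_rep -yv; apply: comp_rep_connected.
split=> //; rewrite -(comp_index_connected ry).
exact: comp_index_connected (comp_rep_connected vV).
Qed.

End Components.

(* If the independence complex of every connected component is sortable, so
   is that of the whole graph: glue component labelings, ordered by
   component index. *)
Lemma sortable_of_components (V : seq nat) (E : rel nat) (symE : symmetric E) :
  (forall x, x \in V -> sortable (component V E x) (indep_complex (component V E x) E)) ->
  sortable (fun x => x \in V) (indep_complex (fun x => x \in V) E).
Proof.
move=> comp_sortable.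
have fam_ex x : exists f : nat -> nat, x \in V ->
    injective_on (component V E x) f /\
    sortable_wrt (relabel (indep_complex (component V E x) E) f).
  by case: (boolP (x \in V)) => [/comp_sortable [f fP] | _]; [exists f | exists id].
have [fam famP] := choice _ fam_ex.
pose h v := fam (comp_rep V E v) v.
apply: (glue_sortable (block := comp_index V E) (h := h) (M := (\max_(v <- V) h v).+1)).
- by move=> v vV; rewrite ltnS (leq_bigmax_seq v vV).
- move=> u v uV vV uv; rewrite /h => huv; have [fam_inj _] := famP _ (comp_rep_in E uV).
  have rep_uv : comp_rep V E u = comp_rep V E v by rewrite /comp_rep uv.
  rewrite rep_uv in fam_inj huv.
  by apply: fam_inj huv; apply/(component_block symE vV).
- exact: (comp_index_edge V symE).
- move=> v vV; have [_ fam_sort] := famP _ (comp_rep_in E vV).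
  apply: sortable_wrt_transport fam_sort => [y | y [yV yv]]; first exact: (component_block symE vV).
  by rewrite /h /comp_rep yv.
Qed.

Theorem corollary1p5 (V : seq nat) (E : rel nat)
  (symE : symmetric E) (irrE : irreflexive E)
  (HE : forall x y, E x y -> (x \in V) && (y \in V)) :
  sortable (fun x => x \in V) (indep_complex (fun x => x \in V) E) <->
  (forall x, x \in V ->
     sortable (component V E x) (indep_complex (component V E x) E)).
Proof.
split=> [V_sortable x _ | ]; last exact: sortable_of_components.
by apply: sortable_induced V_sortable => y [].
Qed.
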